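(* Let $\Theta$, $K$ (with worlds $W$) and $\eta:W\to\mathfrak M$ be as follows: $K$ is a Kripke model for $\mathcal L_\Box$ in which $w\Vdash\phi\to\Box\psi$ for every $\phi\triangleright\psi\in\Theta$ and every world $w$, and $\eta(w)$ is the model of $\mathfrak L$ determined by $\{a\in\mathfrak L: w\Vdash a\}$. Then for every world $w$ of $K$ and every non-modal $p\in\mathfrak L$, if $\eta(w)\Vdash\Box p$ in $K_\Theta$, then $w\Vdash\Box p$ in $K$.
   Context: $\mathfrak L$ is a classical propositional language; $\mathfrak M$ is the set of models (valuations) of $\mathfrak L$. A causal rule is $\phi\triangleright\psi$ with $\phi,\psi\in\mathfrak L$; a causal theory $\Theta$ is a set of causal rules. $R_\Theta$ on $\mathfrak M$: $M\,R_\Theta\,M'$ iff for every $\phi\triangleright\psi\in\Theta$, $M\Vdash\phi$ implies $M'\Vdash\psi$. $\mathcal L_\Box$ is generated by $\mathfrak L$ and a unary operator $\Box$. A Kripke model for $\mathcal L_\Box$: worlds, accessibility relation, valuation of atoms at each world; Boolean connectives classical; $w\Vdash\Box p$ iff $p$ holds at all accessible worlds. $K_\Theta$ is the Kripke model with worlds $\mathfrak M$, accessibility $R_\Theta$, and atoms forced as in the valuation. *)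

Set Implicit Arguments.

Inductive form (A : Type) : Type :=
| Atom : A -> form A
| FBot : form A
| FTop : form A
| FNeg : form A -> form A
| FAnd : form A -> form A -> form A
| FOr  : form A -> form A -> form A
| FImp : form A -> form A -> form A.

Inductive mform (A : Type) : Type :=
| MAtom : A -> mform A
| MBot : mform A
| MTop : mform A
| MNeg : mform A -> mform A
| MAnd : mform A -> mform A -> mform A
| MOr  : mform A -> mform A -> mform A
| MImp : mform A -> mform A -> mform A
| MBox : mform A -> mform A.

Fixpoint embed (A : Type) (f : form A) : mform A :=
  match f with
  | Atom a => MAtom a
  | FBot _ => MBot A
  | FTop _ => MTop A
  | FNeg g => MNeg (embed g)
  | FAnd g h => MAnd (embed g) (embed h)
  | FOr g h => MOr (embed g) (embed h)
  | FImp g h => MImp (embed g) (embed h)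
  end.

Definition model (A : Type) := A -> bool.

Fixpoint sat (A : Type) (M : model A) (f : form A) : Prop :=
  match f with
  | Atom a => M a = true
  | FBot _ => False
  | FTop _ => True
  | FNeg g => ~ sat M g
  | FAnd g h => sat M g /\ sat M h
  | FOr g h => sat M g \/ sat M h
  | FImp g h => sat M g -> sat M h
  end.

Fixpoint forces (A W : Type) (R : W -> W -> Prop) (V : W -> A -> bool)
  (w : W) (f : mform A) : Prop :=
  match f with
  | MAtom a => V w a = true
  | MBot _ => False
  | MTop _ => True
  | MNeg g => ~ forces R V w g
  | MAnd g h => forces R V w g /\ forces R V w h
  | MOr g h => forces R V w g \/ forces R V w h
  | MImp g h => forces R V w g -> forces R V w h
  | MBox g => forall w', R w w' -> forces R V w' g
  end.

(* A causal rule phi |> psi is a pair; a causal theory is a set of rules. *)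
Definition causal_theory (A : Type) := form A -> form A -> Prop.

Definition R_Theta (A : Type) (Th : causal_theory A) (M M' : model A) : Prop :=
  forall phi psi, Th phi psi -> sat M phi -> sat M' psi.

Definition forces_KTheta (A : Type) (Th : causal_theory A) (M : model A)
  (f : mform A) : Prop :=
  @forces A (model A) (R_Theta Th) (fun M0 a => M0 a) M f.

Definition eta (A W : Type) (V : W -> A -> bool) (w : W) : model A :=
  fun a => V w a.


(* A non-modal formula is evaluated at a Kripke world purely
   from the atoms true there, i.e. it is forced at w iff it is satisfied by
   the valuation eta(w) (lemma [forces_embed_iff_sat]); in K_Theta the world
   is itself the valuation ([forces_KTheta_embed_iff_sat]).  The hypothesis
   on K says every rule phi |> psi is "phi -> Box psi" in K, so any K-step
   w R w' is carried by eta to an R_Theta-step eta(w) R_Theta eta(w')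
   ([eta_preserves_access]).  Hence if Box p holds at eta(w) in K_Theta, it
   holds at every eta(w') with w R w', so p is forced at every such w', which
   is Box p at w in K. *)

Lemma forces_embed_iff_sat (A W : Type) (R : W -> W -> Prop)
  (V : W -> A -> bool) (w : W) (f : form A) :
  forces R V w (embed f) <-> sat (eta V w) f.
Proof.
  induction f; simpl; unfold eta in *; tauto.
Qed.

Lemma forces_KTheta_embed_iff_sat (A : Type) (Th : causal_theory A)
  (M : model A) (f : form A) :
  forces_KTheta Th M (embed f) <-> sat M f.
Proof.
  unfold forces_KTheta; induction f; simpl; tauto.
Qed.

Lemma eta_preserves_access (A W : Type) (R : W -> W -> Prop)
  (V : W -> A -> bool) (Th : causal_theory A)
  (HK : forall phi psi, Th phi psi ->
        forall w : W, forces R V w (MImp (embed phi) (MBox (embed psi))))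
  (w w' : W) :
  R w w' -> R_Theta Th (eta V w) (eta V w').
Proof.
  intros Hww' phi psi Hrule Hphi.
  apply (@forces_embed_iff_sat _ _ R).
  apply (HK phi psi Hrule w); [apply forces_embed_iff_sat; exact Hphi | exact Hww'].
Qed.

Theorem mainTheorem6 (A W : Type) (R : W -> W -> Prop) (V : W -> A -> bool)
  (Th : causal_theory A)
  (HK : forall phi psi, Th phi psi ->
        forall w : W, forces R V w (MImp (embed phi) (MBox (embed psi)))) :
  forall (w : W) (p : form A),
    forces_KTheta Th (eta V w) (MBox (embed p)) ->
    forces R V w (MBox (embed p)).
Proof.
  intros w p Hbox w' Hww'.
  apply forces_embed_iff_sat, (@forces_KTheta_embed_iff_sat _ Th).
  exact (Hbox (eta V w') (@eta_preserves_access A W R V Th HK w w' Hww')).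
Qed.
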